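(* In the induced continuum market $\widehat\Gamma$, let $M$ be a stable pseudo-matching and let $M'$ be obtained from $M$ by a type-1, type-2, or type-3 stable transformation. Then $M'$ is a stable pseudo-matching.
   Context: Finite firms $F$, finite workers $W=\{w_1,\dots,w_n\}$, null firm $\o$, $\widetilde F=F\cup\{\o\}$; each worker $w$ has a strict complete transitive preference $\succ_w$ over $\widetilde F$ ($f\succeq_w f'$ means $f\succ_w f'$ or $f=f'$); each firm $f\in F$ has a strict complete transitive preference $\succ_f$ over $2^W$, subsets identified with indicator vectors. For $f\in F$ list the sets $S\succ_f\emptyset$ as $\mathbf u^1\succ_f\cdots\succ_f\mathbf u^L$. For $\mathbf x\in[0,1]^W$ the procedure computing $\widehat{Ch}_f(\mathbf x)$ is: $t_0=0$, $\mathbf z^0=\mathbf x$, $t_k=\min\{1-\sum_{j<k}t_j,\ z^{k-1}_i: u^k_i\ne 0\}$, $\mathbf z^k=\mathbf z^{k-1}-t_k\mathbf u^k$ for $k=1,\dots,L$, and $\widehat{Ch}_f(\mathbf x)=\sum_k t_k\mathbf u^k$; $\widehat{Ch}_{\o}(\mathbf x)=\mathbf x$. A pseudo-matching is $M=(M_f)_{f\in\widetilde F}$ with each $M_f\in[0,1]^W$. For vectors, $\vee$ is componentwise max and $\le$ componentwise. Write $M'_f\succ_f M_f$ if $M'_f=\widehat{Ch}_f(M'_f\vee M_f)$ and $M'_f\neq M_f$. Let $A^{\preceq f}(M)(w)=\sum_{f'\in\widetilde F:f\succeq_w f'}M_{f'}(w)$. $M$ is stable if (i) $M_f=\widehat{Ch}_f(M_f)$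 for each $f\in F$ and $M_f(w)=0$ whenever $\o\succ_w f$; (ii) there are no $f\in F$, $M''\in[0,1]^W$ with $M''\succ_f M_f$ and $M''\le A^{\preceq f}(M)$. Stable transformations of $M$ into $M'$: Type-1: choose $f'\in F$ such that $\sum_{j=1}^L t_j<1$ in the procedure computing $\widehat{Ch}_{f'}(M_{f'})$; set $M'_{f'}=\mathbf 0$ and $M'_f=M_f$ for $f\ne f'$. Type-2: choose $f'\in F$ and an index $k$ with $t_k>0$ in the procedure computing $\widehat{Ch}_{f'}(M_{f'})$; set $M'_{f'}=\mathbf u^k$ (for $f'$'s list) and $M'_f=M_f$ for $f\neq f'$. Type-3: choose $w'\in W$ with $M_{\o}(w')\in(0,1)$; set $M'_{\o}(w')\in\{0,1\}$, $M'_{\o}(w)=M_{\o}(w)$ for $w\ne w'$, and $M'_f=M_f$ for $f\in F$. *)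

From HB Require Import structures.
From mathcomp Require Import all_boot all_order all_algebra.
Set Implicit Arguments.
Unset Strict Implicit.
Unset Printing Implicit Defensive.
Import Order.TTheory GRing.Theory Num.Theory.
Local Open Scope ring_scope.

(* A (finite) market: firms F, workers W; the null firm is [None : option F].
   [wpref G w a b] means  a >_w b  (strict preference of worker w);
   [fpref G f A B] means  A >_f B  (strict preference of firm f over 2^W). *)
Record market (F W : finType) := Market {
  wpref : W -> rel (option F);
  fpref : F -> rel {set W};
  wpref_irr : forall w a, ~~ wpref w a a;
  wpref_trans : forall w a b c, wpref w a b -> wpref w b c -> wpref w a c;
  wpref_total : forall w a b, a != b -> wpref w a b || wpref w b a;
  fpref_irr : forall f A, ~~ fpref f A A;
  fpref_trans : forall f A B C, fpref f A B -> fpref f B C -> fpref f A C;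
  fpref_total : forall f A B, A != B -> fpref f A B || fpref f B A
}.

Section Continuum.
Variables (R : realFieldType) (F W : finType) (G : market F W).

Definition acc_list (f : F) : seq {set W} :=
  sort (fun A B => (A == B) || fpref G f A B)
       [seq S <- enum {: {set W}} | fpref G f S set0].

(* the sequence t_1, ..., t_L of the procedure; [b] is the remaining budget
   1 - sum_{j<k} t_j and [z] the current vector z^{k-1} *)
Fixpoint tseq (us : seq {set W}) (b : R) (z : W -> R) : seq R :=
  match us with
  | [::] => [::]
  | u :: us' =>
      let t := \big[Order.min/b]_(i in u) z i in
      t :: tseq us' (b - t) (fun i => if i \in u then z i - t else z i)
  end.

Definition tseqf (f : F) (x : W -> R) : seq R := tseq (acc_list f) 1 x.

Definition ind (S : {set W}) : W -> R := fun w => (w \in S)%:R.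

Definition chhat (g : option F) (x : W -> R) : W -> R :=
  match g with
  | None => x
  | Some f => fun w =>
      \sum_(k < size (acc_list f)) (tseqf f x)`_k * ind (nth set0 (acc_list f) k) w
  end.

Definition vmax (x y : W -> R) : W -> R := fun w => Order.max (x w) (y w).
Definition vle (x y : W -> R) : Prop := forall w, x w <= y w.
Definition unit_vec (x : W -> R) : Prop := forall w, 0 <= x w <= 1.

Definition pmatching := option F -> W -> R.
Definition is_pseudo (M : pmatching) : Prop := forall g, unit_vec (M g).

Definition fprefers (f : F) (M'' Mf : W -> R) : Prop :=
  M'' = chhat (Some f) (vmax M'' Mf) /\ M'' <> Mf.

Definition Aweak (M : pmatching) (f : F) : W -> R := fun w =>
  \sum_(g : option F | (g == Some f) || wpref G w (Some f) g) M g w.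

Definition stable (M : pmatching) : Prop :=
  (forall f : F, M (Some f) = chhat (Some f) (M (Some f)) /\
     (forall w, wpref G w None (Some f) -> M (Some f) w = 0)) /\
  ~ (exists (f : F) (M'' : W -> R),
       unit_vec M'' /\ fprefers f M'' (M (Some f)) /\ vle M'' (Aweak M f)).

Definition transform1 (M M' : pmatching) : Prop :=
  exists f' : F,
    \sum_(t <- tseqf f' (M (Some f'))) t < 1 /\
    M' (Some f') = (fun _ => 0) /\
    (forall g, g != Some f' -> M' g = M g).

(* the index k is 0-based here (k = 0 is u^1) *)
Definition transform2 (M M' : pmatching) : Prop :=
  exists (f' : F) (k : nat),
    (k < size (acc_list f'))%N /\
    0 < (tseqf f' (M (Some f')))`_k /\
    M' (Some f') = ind (nth set0 (acc_list f') k) /\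
    (forall g, g != Some f' -> M' g = M g).

Definition transform3 (M M' : pmatching) : Prop :=
  exists w' : W,
    0 < M None w' < 1 /\
    (M' None w' = 0 \/ M' None w' = 1) /\
    (forall w, w != w' -> M' None w = M None w) /\
    (forall f : F, M' (Some f) = M (Some f)).

End Continuum.

(* The procedure computing [Ch_f] is greedy: it walks down f's list of
   acceptable sets and gives each one the largest weight allowed by the
   remaining budget and by the remaining supply of its members.  Lowering the supply [x] to anything between [Ch_f x]
   and [x] does not change the outcome (rejected workers are irrelevant), while
   raising the supply does change it as soon as the procedure can use the
   extra supply: because the budget was not exhausted (type 1), or because a
   set ranked above the chosen one loses its bottleneck (type 2).

   A stable transformation changes a single column of [M].  For a firm other
   than the one changed, the availability [A^{<=f}] grows only at workers that
   [f] does not saturate, so cutting a blocking vector down to the old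
   availability gives a blocking vector for [M].  For the changed firm, a
   blocking vector for [M'] exhibits workers on which [M_f] has slack; raising
   [M_f] there by a small [e] changes the outcome of the procedure, which again
   gives a blocking vector for [M]. *)

From HB Require Import structures.
From mathcomp Require Import all_boot all_order all_algebra.
From Stdlib Require Import FunctionalExtensionality.
From mathcomp Require Import lra.
Set Implicit Arguments.
Unset Strict Implicit.
Unset Printing Implicit Defensive.
Import Order.TTheory GRing.Theory Num.Theory.
Local Open Scope ring_scope.

Section Greedy.
Variables (R : realFieldType) (W : finType).
Implicit Types (us : seq {set W}) (u U : {set W}) (b t c e : R) (x y z : W -> R).

Definition step_weight u b z : R := \big[Order.min/b]_(i in u) z i.

Definition step_rest u t z : W -> R := fun i => if i \in u then z i - t else z i.

Definition greedy_choice us b x : W -> R :=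
  fun w => \sum_(k < size us) (tseq us b x)`_k * ind R (nth set0 us k) w.

Definition raise (P : pred W) e z : W -> R := fun i => if P i then z i + e else z i.

Lemma tseq_cons u us b z :
  tseq (u :: us) b z =
  step_weight u b z :: tseq us (b - step_weight u b z) (step_rest u (step_weight u b z) z).
Proof. by []. Qed.

Lemma size_tseq us b z : size (tseq us b z) = size us.
Proof. by elim: us b z => [//|u us IH] b z /=; rewrite IH. Qed.

Lemma greedy_choice_cons u us b x w :
  greedy_choice (u :: us) b x w =
  step_weight u b x * ind R u w +
  greedy_choice us (b - step_weight u b x) (step_rest u (step_weight u b x) x) w.
Proof. by rewrite /greedy_choice big_ord_recl. Qed.

Lemma step_weight_le_budget u b z : step_weight u b z <= b.
Proof. exact: bigmin_le_id. Qed.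

Lemma step_weight_le u b z i : i \in u -> step_weight u b z <= z i.
Proof. exact: bigmin_le_cond. Qed.

Lemma step_weight_ge0 u b z : 0 <= b -> (forall i, 0 <= z i) -> 0 <= step_weight u b z.
Proof. by move=> b0 z0; apply: le_bigmin. Qed.

Lemma step_weight_glb u b z a :
  a <= b -> (forall i, i \in u -> a <= z i) -> a <= step_weight u b z.
Proof. by move=> ab az; apply: le_bigmin. Qed.

Lemma le_step_weight u b z z' :
  (forall i, z i <= z' i) -> step_weight u b z <= step_weight u b z'.
Proof. by move=> zz'; apply: le_bigmin2 => i _; apply: zz'. Qed.

Lemma step_weight_attained u b z :
  step_weight u b z = b \/ exists2 i, i \in u & step_weight u b z = z i.
Proof.
apply: (big_ind (fun v => v = b \/ exists2 i, i \in u & v = z i)) => [|v1 v2 H1 H2|i iu].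
- by left.
- by rewrite minElt; case: ifP.
- by right; exists i.
Qed.

Lemma budget_rest_ge0 u b z : 0 <= b -> 0 <= b - step_weight u b z.
Proof. by rewrite subr_ge0 step_weight_le_budget. Qed.

Lemma step_rest_ge0 u b z : 0 <= b -> (forall i, 0 <= z i) ->
  forall i, 0 <= step_rest u (step_weight u b z) z i.
Proof.
move=> b0 z0 i; rewrite /step_rest; case: ifP => iu //.
by rewrite subr_ge0 step_weight_le.
Qed.

Lemma step_rest_le u t z i : 0 <= t -> step_rest u t z i <= z i.
Proof. by move=> t0; rewrite /step_rest; case: ifP => // _; rewrite gerBl. Qed.

Lemma eq_tseq us b z z' : (forall i, z i = z' i) -> tseq us b z = tseq us b z'.
Proof.
elim: us b z z' => [//|u us IH] b z z' zz'; rewrite !tseq_cons.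
have -> : step_weight u b z = step_weight u b z'.
  by apply: eq_bigr => i _; rewrite zz'.
by congr (_ :: _); apply: IH => i; rewrite /step_rest zz'.
Qed.

Lemma tseq_ge0 us b z : 0 <= b -> (forall i, 0 <= z i) ->
  forall k, 0 <= (tseq us b z)`_k.
Proof.
elim: us b z => [|u us IH] b z b0 z0 k; first by rewrite nth_nil.
rewrite tseq_cons; case: k => [|k] /=; first exact: step_weight_ge0.
by apply: IH; [apply: budget_rest_ge0 | apply: step_rest_ge0].
Qed.

Lemma tseq_le_budget us b z : 0 <= b -> (forall i, 0 <= z i) ->
  forall k, (tseq us b z)`_k <= b.
Proof.
elim: us b z => [|u us IH] b z b0 z0 k; first by rewrite nth_nil.
rewrite tseq_cons; case: k => [|k] /=; first exact: step_weight_le_budget.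
apply: le_trans (IH _ _ (budget_rest_ge0 _ _ b0) (step_rest_ge0 _ b0 z0) k) _.
by rewrite gerBl step_weight_ge0.
Qed.

Lemma tseq_le us b z : 0 <= b -> (forall i, 0 <= z i) ->
  forall k i, (k < size us)%N -> i \in nth set0 us k -> (tseq us b z)`_k <= z i.
Proof.
elim: us b z => [//|u us IH] b z b0 z0 k i.
rewrite tseq_cons; case: k => [|k] /= kl ik; first exact: step_weight_le.
apply: le_trans (IH _ _ (budget_rest_ge0 _ _ b0) (step_rest_ge0 _ b0 z0) k i kl ik) _.
by apply: step_rest_le; apply: step_weight_ge0.
Qed.

Lemma sum_tseq_le_budget us b z : 0 <= b -> (forall i, 0 <= z i) ->
  \sum_(k < size us) (tseq us b z)`_k <= b.
Proof.
elim: us b z => [|u us IH] b z b0 z0; first by rewrite big_ord0.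
rewrite big_ord_recl tseq_cons /= -lerBrDl.
exact: IH (budget_rest_ge0 _ _ b0) (step_rest_ge0 _ b0 z0).
Qed.

Lemma ind01 U w : 0 <= ind R U w <= 1.
Proof. by rewrite /ind; case: (w \in U); rewrite lexx ler01. Qed.

Lemma greedy_choice_ge0 us b x w : 0 <= b -> (forall i, 0 <= x i) ->
  0 <= greedy_choice us b x w.
Proof.
move=> b0 x0; apply: sumr_ge0 => k _.
by apply: mulr_ge0; [apply: tseq_ge0 | case/andP: (ind01 (nth set0 us k) w)].
Qed.

Lemma greedy_choice_le us b x w : 0 <= b -> (forall i, 0 <= x i) ->
  greedy_choice us b x w <= x w.
Proof.
elim: us b x => [|u us IH] b x b0 x0; first by rewrite /greedy_choice big_ord0.
rewrite greedy_choice_cons.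
move: (IH _ _ (budget_rest_ge0 u x b0) (step_rest_ge0 u b0 x0)).
rewrite /step_rest /ind; case: ifP => _.
  by rewrite mulr1 -lerBrDl.
by rewrite mulr0 add0r.
Qed.

Lemma greedy_choice_le_sum us b x w : 0 <= b -> (forall i, 0 <= x i) ->
  greedy_choice us b x w <= \sum_(k < size us) (tseq us b x)`_k.
Proof.
move=> b0 x0; apply: ler_sum => k _; rewrite ler_piMr ?tseq_ge0 //.
by case/andP: (ind01 (nth set0 us k) w).
Qed.

Lemma greedy_choice_le_budgetB us b x w k : 0 <= b -> (forall i, 0 <= x i) ->
  (k < size us)%N -> w \notin nth set0 us k ->
  greedy_choice us b x w <= b - (tseq us b x)`_k.
Proof.
move=> b0 x0 kl wk.
have := sum_tseq_le_budget us b0 x0; rewrite (bigD1 (Ordinal kl)) //= -lerBrDl.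
apply: le_trans; rewrite /greedy_choice (bigD1 (Ordinal kl)) //= /ind (negbTE wk).
rewrite mulr0 add0r; apply: ler_sum => m _; rewrite ler_piMr ?tseq_ge0 //.
by case/andP: (ind01 (nth set0 us m) w).
Qed.

Lemma greedy_choice_budget0 us x w : (forall i, 0 <= x i) -> greedy_choice us 0 x w = 0.
Proof.
move=> x0; apply: big1 => k _.
suff -> : (tseq us 0 x)`_k = 0 by rewrite mul0r.
by apply/eqP; rewrite eq_le tseq_le_budget ?tseq_ge0.
Qed.

Lemma greedy_choice0 us w : greedy_choice us 1 (fun=> 0) w = 0.
Proof.
by apply/eqP; rewrite eq_le greedy_choice_le ?greedy_choice_ge0 ?ler01.
Qed.

Lemma greedy_choice_single us b x k : 0 <= b -> (forall i, 0 <= x i) ->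
  (k < size us)%N ->
  (forall j, (j < k)%N -> exists2 i, i \in nth set0 us j & x i = 0) ->
  (forall i, i \in nth set0 us k -> b <= x i) ->
  forall w, greedy_choice us b x w = b * ind R (nth set0 us k) w.
Proof.
elim: us b x k => [//|u us IH] b x [|k] b0 x0 kl Hj Hk w; rewrite greedy_choice_cons /=.
  have Eb : step_weight u b x = b.
    by apply/eqP; rewrite eq_le step_weight_le_budget step_weight_glb.
  by rewrite Eb subrr greedy_choice_budget0 ?addr0 // -Eb; apply: step_rest_ge0.
have E0 : step_weight u b x = 0.
  have [i iu xi] := Hj 0%N isT.
  by apply/eqP; rewrite eq_le step_weight_ge0 // andbT -xi step_weight_le.
have rest0 i : step_rest u 0 x i = x i by rewrite /step_rest subr0; case: ifP.
rewrite E0 mul0r add0r subr0 /greedy_choice (eq_tseq _ _ rest0).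
by apply: IH => // j; apply: (Hj j.+1).
Qed.

Lemma greedy_choice_support us b x w : 0 <= b -> (forall i, 0 <= x i) ->
  greedy_choice us b x w != 0 ->
  exists k, [/\ (k < size us)%N, 0 < (tseq us b x)`_k & w \in nth set0 us k].
Proof.
move=> b0 x0 nz.
have /existsP [k] :
    [exists k : 'I_(size us), (tseq us b x)`_k * ind R (nth set0 us k) w != 0].
  apply: contraNT nz => /existsPn nz; apply/eqP/big1 => k _.
  by apply/eqP; move: (nz k); rewrite negbK.
rewrite mulf_eq0 negb_or => /andP [tk wk]; exists k; split => //.
  by rewrite lt_neqAle eq_sym tk tseq_ge0.
by move: wk; rewrite /ind; case: (w \in _); rewrite ?eqxx.
Qed.

Lemma tseq_rejected_irrelevant us b x z : 0 <= b -> (forall i, 0 <= x i) ->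
  (forall w, greedy_choice us b x w <= z w) -> (forall w, z w <= x w) ->
  tseq us b z = tseq us b x.
Proof.
elim: us b x z => [//|u us IH] b x z b0 x0 chz zx; rewrite !tseq_cons.
have E : step_weight u b z = step_weight u b x.
  apply/eqP; rewrite eq_le le_step_weight //= step_weight_glb ?step_weight_le_budget //.
  move=> i iu; apply: le_trans (chz i); rewrite greedy_choice_cons /ind iu mulr1 lerDl.
  exact: greedy_choice_ge0 (budget_rest_ge0 _ _ b0) (step_rest_ge0 _ b0 x0).
rewrite E; congr (_ :: _); apply: IH.
- exact: budget_rest_ge0.
- exact: step_rest_ge0.
- move=> w; have := chz w; rewrite greedy_choice_cons /step_rest /ind.
  case: ifP => _; last by rewrite mulr0 add0r.
  by rewrite mulr1 lerBrDl addrC.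
- by move=> w; rewrite /step_rest; case: ifP => _; rewrite ?lerD2r zx.
Qed.

(* A bottleneck of [xt] is a coordinate where [xt = y], hence where [x = y]. *)
Lemma tseq_eq_extend us b y xt x :
  (forall i, y i <= xt i) -> (forall i, xt i <= x i) ->
  (forall i, xt i = y i -> x i = y i) ->
  tseq us b xt = tseq us b y -> tseq us b x = tseq us b y.
Proof.
elim: us b y xt x => [//|u us IH] b y xt x yxt xtx Exy; rewrite !tseq_cons => -[Eh Et].
have E : step_weight u b x = step_weight u b y.
  rewrite -Eh; apply/eqP; rewrite eq_le; apply/andP; split; last exact: le_step_weight.
  have [->|[i iu Ei]] := step_weight_attained u b xt; first exact: step_weight_le_budget.
  have xty : xt i = y i by apply/eqP; rewrite eq_le yxt andbT -Ei Eh step_weight_le.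
  by rewrite Ei xty -(Exy i xty) step_weight_le.
rewrite E; congr (_ :: _); apply: (IH _ _ (step_rest u (step_weight u b y) xt)).
- by move=> i; rewrite /step_rest; case: ifP => _; rewrite ?lerD2r yxt.
- by move=> i; rewrite /step_rest; case: ifP => _; rewrite ?lerD2r xtx.
- move=> i; rewrite /step_rest; case: ifP => _ Hi; last exact: Exy.
  by rewrite (Exy i (addIr _ Hi)).
- by move: Et; rewrite Eh.
Qed.

Lemma tseq_raise_slack us b y U c : 0 <= b -> (forall i, 0 <= y i) ->
  \sum_(k < size us) (tseq us b y)`_k < b -> U \in us -> 0 < c ->
  tseq us b (raise [pred i in U] c y) <> tseq us b y.
Proof.
elim: us b y => [//|u us IH] b y b0 y0.
rewrite big_ord_recl inE !tseq_cons /= => Hs HU c0 [Eh Et].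
have tb : step_weight u b y < b.
  apply: le_lt_trans Hs; rewrite lerDl; apply: sumr_ge0 => k _.
  exact: tseq_ge0 (budget_rest_ge0 _ _ b0) (step_rest_ge0 _ b0 y0) _.
case/orP: HU => [/eqP EU|HU].
  subst U; move: Eh.
  have [->|[i iu ->]] := step_weight_attained u b (raise [pred i in u] c y).
    by move=> E; move: tb; rewrite -E ltxx.
  by rewrite /raise /= iu => E; have := step_weight_le b y iu; rewrite -E; lra.
apply: (IH (b - step_weight u b y) (step_rest u (step_weight u b y) y)) => //.
- exact: budget_rest_ge0.
- exact: step_rest_ge0.
- by rewrite ltrBrDl.
- rewrite -Et -Eh; apply: eq_tseq => i; rewrite /raise /step_rest /=.
  by case: ifP => _ //; case: ifP => _ //; rewrite addrAC.
Qed.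

Lemma step_weight_lt_budget u us b y k : 0 <= b -> (forall i, 0 <= y i) ->
  0 < (tseq (u :: us) b y)`_k.+1 -> step_weight u b y < b.
Proof.
move=> b0 y0; rewrite tseq_cons /= => tk; rewrite -subr_gt0; apply: lt_le_trans tk _.
exact: tseq_le_budget (budget_rest_ge0 _ _ b0) (step_rest_ge0 _ b0 y0) _.
Qed.

(* If the sequences agreed, the budget would not bind at step [j] (as [t_k > 0]),
   so some [i] in [u_j] would be a bottleneck for [x]; [y i < x i] then rules it
   out as a bottleneck for [y], and [i \in u_k] would leave no supply of [i] for
   step [k]. *)
Lemma tseq_raise_preferred us b y x j k : 0 <= b -> (forall i, 0 <= y i) ->
  (forall i, y i <= x i) -> (j < k)%N -> (k < size us)%N -> 0 < (tseq us b y)`_k ->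
  (forall i, i \in nth set0 us j -> i \in nth set0 us k \/ y i < x i) ->
  tseq us b x <> tseq us b y.
Proof.
elim: us b y x j k => [//|u us IH] b y x j k b0 y0 yx.
case: k => [//|k] jk kl tk Hj.
have tb := step_weight_lt_budget b0 y0 tk.
move: tk; rewrite !tseq_cons /= => tk [Eh Et].
have b'0 := budget_rest_ge0 u y b0; have y'0 := step_rest_ge0 u b0 y0.
case: j jk Hj => [|j] jk Hj /=; last first.
  apply: (IH (b - step_weight u b y) (step_rest u (step_weight u b y) y)
             (step_rest u (step_weight u b y) x) j k) => //.
  - by move=> i; rewrite /step_rest; case: ifP => _; rewrite ?lerD2r yx.
  - move=> i ij; case: (Hj i ij) => [->|lt]; [by left | right].
    by rewrite /step_rest; case: ifP => _; rewrite ?ltrD2r.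
  - by move: Et; rewrite Eh.
move: Eh; have [->|[i iu ->]] := step_weight_attained u b x.
  by move=> E; move: tb; rewrite -E ltxx.
move=> E; have [ik|lt] := Hj i iu; last first.
  by have := step_weight_le b y iu; rewrite -E leNgt lt.
have yi : y i = step_weight u b y by apply/eqP; rewrite eq_le step_weight_le // andbT -E yx.
have rest0 : step_rest u (step_weight u b y) y i = 0 by rewrite /step_rest iu yi subrr.
by have := tseq_le b'0 y'0 (kl : (k < size us)%N) ik; rewrite rest0 leNgt tk.
Qed.

Lemma tseq_gt0_not_subset us b y j k : 0 <= b -> (forall i, 0 <= y i) ->
  (j < k)%N -> (k < size us)%N -> 0 < (tseq us b y)`_k ->
  ~~ (nth set0 us j \subset nth set0 us k).
Proof.
move=> b0 y0 jk kl tk; apply/negP => sub.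
apply: (tseq_raise_preferred b0 y0 (x := y) _ jk kl tk) => // i ij.
by left; apply: (subsetP sub).
Qed.

Lemma greedy_choice_ind us y k : (forall i, 0 <= y i) ->
  (k < size us)%N -> 0 < (tseq us 1 y)`_k ->
  greedy_choice us 1 (ind R (nth set0 us k)) = ind R (nth set0 us k).
Proof.
move=> y0 kl tk; set U := nth set0 us k.
have U0 : forall i, 0 <= ind R U i by move=> i; case/andP: (ind01 U i).
have earlier_out : forall j, (j < k)%N -> exists2 i, i \in nth set0 us j & ind R U i = 0.
  move=> j jk; have /subsetPn [i ij iU] := tseq_gt0_not_subset ler01 y0 jk kl tk.
  by exists i; rewrite // /ind (negbTE iU).
have U1 : forall i, i \in U -> 1 <= ind R U i by move=> i iU; rewrite /ind iU.
apply: functional_extensionality => w.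
by rewrite (greedy_choice_single ler01 U0 kl earlier_out U1) mul1r.
Qed.

Lemma exists_pos_lower_bound (P : pred W) (g : W -> R) :
  (forall i, P i -> 0 < g i) -> exists2 e, 0 < e & forall i, P i -> e <= g i.
Proof.
move=> gP; exists (\big[Order.min/1]_(i | P i) g i); first exact: lt_bigmin.
by move=> i Pi; apply: bigmin_le_cond.
Qed.

End Greedy.

Section Market.
Variables (R : realFieldType) (F W : finType) (G : market F W).
Implicit Types (M : pmatching R F W) (f : F) (g : option F) (x y A : W -> R).

Lemma chhatE f x : chhat G (Some f) x = greedy_choice (acc_list G f) 1 x.
Proof. by []. Qed.

Lemma chhat_tseqf f x y :
  tseqf G f x = tseqf G f y -> chhat G (Some f) x = chhat G (Some f) y.
Proof. by rewrite /chhat => ->. Qed.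

Definition weakly_below f w g := (g == Some f) || wpref G w (Some f) g.

Lemma weakly_below_self f w : weakly_below f w (Some f).
Proof. by rewrite /weakly_below eqxx. Qed.

Lemma Aweak_update M M' f w g0 : (forall g, g != g0 -> M' g w = M g w) ->
  Aweak G M' f w = Aweak G M f w + (if weakly_below f w g0 then M' g0 w - M g0 w else 0).
Proof.
move=> MM'; rewrite /Aweak; case: ifP => g0f.
  rewrite (bigD1 g0) // [in RHS](bigD1 g0) //=.
  rewrite (eq_bigr (fun g => M g w)) => [|g /andP [_]]; last exact: MM'.
  lra.
rewrite addr0; apply: eq_bigr => g gf; apply: MM'.
by apply: contraFneq g0f => <-.
Qed.

Lemma le_Aweak M f w g : is_pseudo M -> weakly_below f w g -> M g w <= Aweak G M f w.
Proof.
move=> Mp gf; rewrite /Aweak (bigD1 g) //= lerDl.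
by apply: sumr_ge0 => g' _; case/andP: (Mp g' w).
Qed.

Lemma leD_Aweak M f w g1 g2 : is_pseudo M ->
  weakly_below f w g1 -> weakly_below f w g2 -> g1 != g2 ->
  M g1 w + M g2 w <= Aweak G M f w.
Proof.
move=> Mp g1f g2f g12; rewrite /Aweak (bigD1 g1) // (bigD1 g2) /=; last first.
  by move: g2f; rewrite /weakly_below => ->; rewrite eq_sym.
by rewrite addrA lerDl; apply: sumr_ge0 => g _; case/andP: (Mp g w).
Qed.

Definition has_blocker f y A : Prop :=
  exists M'' : W -> R, unit_vec M'' /\ fprefers G f M'' y /\ vle M'' A.

Lemma has_blocker_of_tseq f y A x : y = chhat G (Some f) y -> (forall i, 0 <= y i) ->
  (forall i, y i <= x i) -> (forall i, x i <= 1) -> (forall i, x i <= A i) ->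
  tseqf G f x <> tseqf G f y -> has_blocker f y A.
Proof.
move=> Sy y0 yx x1 xA xy.
have x0 i : 0 <= x i by apply: le_trans (yx i).
have ch0 w : 0 <= chhat G (Some f) x w by apply: greedy_choice_ge0.
have chx w : chhat G (Some f) x w <= x w by apply: greedy_choice_le.
exists (chhat G (Some f) x); split; [|split; [split|]].
- by move=> w; rewrite ch0 (le_trans (chx w) (x1 w)).
- apply: chhat_tseqf; symmetry; apply: tseq_rejected_irrelevant => // w.
    by rewrite /vmax le_max lexx.
  by rewrite /vmax ge_max chx yx.
- move=> chy; apply: xy; symmetry; apply: tseq_rejected_irrelevant => // w.
  by rewrite -chhatE chy.
- by move=> w; apply: le_trans (chx w) (xA w).
Qed.

Lemma has_blocker_raise f y A (P : pred W) : y = chhat G (Some f) y ->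
  (forall i, 0 <= y i <= 1) -> (forall i, y i <= A i) ->
  (forall i, P i -> y i < A i) -> (forall i, P i -> y i < 1) ->
  (forall e, 0 < e -> tseqf G f (raise P e y) <> tseqf G f y) -> has_blocker f y A.
Proof.
move=> Sy y01 yA yAP y1P raise_neq.
have [e e0 eP] := exists_pos_lower_bound (P := P)
  (g := fun i => Order.min (A i - y i) (1 - y i))
  (fun i Pi => ltac:(by rewrite lt_min !subr_gt0 yAP ?y1P)).
have eA i : P i -> y i + e <= A i.
  by move=> Pi; rewrite -lerBrDl; have := eP i Pi; rewrite le_min => /andP [].
have e1 i : P i -> y i + e <= 1.
  by move=> Pi; rewrite -lerBrDl; have := eP i Pi; rewrite le_min => /andP [].
apply: (has_blocker_of_tseq Sy _ _ _ _ (raise_neq e e0)); rewrite /raise.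
- by move=> i; case/andP: (y01 i).
- by move=> i; case: ifP => _; rewrite ?lerDl ?(ltW e0).
- by move=> i; case: ifP => Pi; [apply: e1 | case/andP: (y01 i)].
- by move=> i; case: ifP => Pi; [apply: eA | apply: yA].
Qed.

Lemma has_blocker_restrict f y A A' : y = chhat G (Some f) y ->
  (forall i, 0 <= y i <= 1) -> (forall i, y i <= A i) ->
  (forall i, A i < A' i -> y i < A i) ->
  has_blocker f y A' -> has_blocker f y A.
Proof.
move=> Sy y01 yA AA' [M'' [M''01 [[M''ch M''y] M''A']]].
set x := vmax M'' y; set xt := fun i => Order.min (x i) (A i).
have yx i : y i <= x i by rewrite /x /vmax le_max lexx orbT.
have yxt i : y i <= xt i by rewrite /xt le_min yx yA.
apply: (has_blocker_of_tseq (x := xt) Sy _ yxt).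
- by move=> i; case/andP: (y01 i).
- move=> i; rewrite /xt /x /vmax ge_min ge_max.
  by case/andP: (M''01 i) => _ ->; case/andP: (y01 i) => _ ->.
- by move=> i; rewrite /xt ge_min lexx orbT.
move=> Et; apply: M''y.
suff Ex : tseqf G f x = tseqf G f y by rewrite M''ch -/x (chhat_tseqf Ex) -Sy.
apply: (tseq_eq_extend yxt) Et => [i|i xty]; first by rewrite /xt ge_min lexx.
apply/eqP; rewrite eq_le yx andbT leNgt; apply/negP => ltyx.
have yM : y i < M'' i by move: ltyx; rewrite /x /vmax lt_max ltxx orbF.
have xM : x i = M'' i by rewrite /x /vmax max_l // ltW.
have Ay : A i = y i.
  by move: xty; rewrite /xt minElt; case: ifP => // _ xy; move: ltyx; rewrite xy ltxx.
have AA'i : A i < A' i by rewrite Ay (lt_le_trans ltyx) // xM M''A'.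
by have := AA' i AA'i; rewrite Ay ltxx.
Qed.

Lemma no_blocker_update M M' f g0 : is_pseudo M -> stable G M -> Some f != g0 ->
  (forall g, g != g0 -> M' g = M g) ->
  (forall w, weakly_below f w g0 -> M g0 w < M' g0 w -> M (Some f) w < Aweak G M f w) ->
  ~ has_blocker f (M' (Some f)) (Aweak G M' f).
Proof.
move=> Mp [Mind Mno] fg0 MM' slack blk; apply: Mno; exists f.
rewrite (MM' _ fg0) in blk.
apply: (has_blocker_restrict (proj1 (Mind f)) (Mp _) _ _ blk).
  by move=> w; apply: le_Aweak (weakly_below_self f w).
move=> w; rewrite (@Aweak_update M M' f w g0) => [|g gg0]; last by rewrite MM'.
case: ifP => [g0f|_]; last by rewrite addr0 ltxx.
by rewrite ltrDl subr_gt0; apply: slack.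
Qed.

End Market.

Section Transformations.
Variables (R : realFieldType) (F W : finType) (G : market F W).
Implicit Types (M : pmatching R F W) (f : F).

Lemma Some_neq f f' : f != f' -> Some f != Some f'.
Proof. by rewrite (inj_eq (@Some_inj _)). Qed.

Lemma stable_transform3 M M' : is_pseudo M -> stable G M -> transform3 M M' ->
  is_pseudo M' /\ stable G M'.
Proof.
move=> Mp SM [w' [/andP [w'0 _] [M'w' [M'w Mf]]]].
have MM' g : g != None -> M' g = M g by case: g => // f _; apply: Mf.
split; [|split].
- case=> [f|] w; first by rewrite Mf; apply: Mp.
  have [->|ww'] := eqVneq w w'; last by rewrite M'w //; apply: Mp.
  by case: M'w' => ->; rewrite lexx ler01.
- by move=> f; rewrite Mf; apply: (proj1 SM).
- move=> [f blk]; apply: (no_blocker_update Mp SM _ MM') blk => // w.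
  have [->|ww'] := eqVneq w w'; last by rewrite M'w // ltxx.
  move=> w'f _; apply: lt_le_trans _ (leD_Aweak Mp (weakly_below_self G f w') w'f _) => //.
  by rewrite ltrDl.
Qed.

Lemma no_blocker_dropped M f : is_pseudo M -> stable G M ->
  \sum_(t <- tseqf G f (M (Some f))) t < 1 ->
  ~ has_blocker G f (fun=> 0) (fun w => Aweak G M f w - M (Some f) w).
Proof.
move=> Mp [Mind Mno] slack [M'' [M''01 [[M''ch M''0] M''A]]].
set y := M (Some f); set us := acc_list G f.
have y01 := Mp (Some f); have Sy : y = chhat G (Some f) y := proj1 (Mind f).
have y0 i : 0 <= y i by case/andP: (y01 i).
have M''ge0 i : 0 <= M'' i by case/andP: (M''01 i).
have {}M''ch : M'' = chhat G (Some f) M''.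
  rewrite {1}M''ch; congr chhat; apply: functional_extensionality => i.
  by rewrite /vmax max_l.
have [w0 M''w0] : exists w0, M'' w0 != 0.
  case: (pickP (fun w => M'' w != 0)) => [w0 ?|M''eq0]; first by exists w0.
  case: M''0; apply: functional_extensionality => w.
  by apply/eqP; rewrite -[_ == _]negbK M''eq0.
rewrite M''ch chhatE in M''w0.
have [k [kl tk w0k]] := greedy_choice_support ler01 M''ge0 M''w0.
have slackU i : i \in nth set0 us k -> y i < Aweak G M f i.
  move=> iU; rewrite -subr_gt0; apply: lt_le_trans tk (le_trans _ (M''A i)).
  exact: tseq_le.
have slack' : \sum_(k < size us) (tseq us 1 y)`_k < 1.
  by move: slack; rewrite /tseqf (big_nth 0) size_tseq big_mkord.
have y1 i : y i < 1.
  by rewrite Sy chhatE; apply: le_lt_trans (greedy_choice_le_sum _ _ ler01 y0) slack'.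
have yA i : y i <= Aweak G M f i by apply: le_Aweak (weakly_below_self G f i).
have raise_neq e : 0 < e -> tseqf G f (raise [pred i in nth set0 us k] e y) <> tseqf G f y.
  by move=> e0; apply: tseq_raise_slack ler01 y0 slack' (mem_nth set0 kl) e0.
apply: Mno; exists f.
exact: (has_blocker_raise Sy y01 yA slackU (fun i _ => y1 i) raise_neq).
Qed.

Lemma stable_transform1 M M' : is_pseudo M -> stable G M -> transform1 G M M' ->
  is_pseudo M' /\ stable G M'.
Proof.
move=> Mp SM [f' [slack [M'f' MM']]].
split; [|split].
- move=> g w; have [->|gf'] := eqVneq g (Some f'); first by rewrite M'f' lexx ler01.
  by rewrite MM' //; apply: Mp.
- move=> f; have [->|ff'] := eqVneq f f'; last first.
    by rewrite (MM' _ (Some_neq ff')); apply: (proj1 SM).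
  rewrite M'f'; split=> //; apply: functional_extensionality => w.
  by rewrite chhatE greedy_choice0.
move=> [f blk]; have [ff'|ff'] := eqVneq f f'; last first.
  apply: (no_blocker_update Mp SM (Some_neq ff') MM') blk => w _.
  by rewrite M'f' ltNge; case/andP: (Mp (Some f') w) => ->.
subst f; move: blk; rewrite M'f'.
suff -> : Aweak G M' f' = fun w => Aweak G M f' w - M (Some f') w.
  exact: no_blocker_dropped.
apply: functional_extensionality => w.
rewrite (@Aweak_update _ _ _ G M M' f' w (Some f')) => [|g gf']; last by rewrite MM'.
by rewrite weakly_below_self M'f' sub0r.
Qed.

Lemma no_blocker_chosen_set M f k : is_pseudo M -> stable G M ->
  (k < size (acc_list G f))%N -> 0 < (tseqf G f (M (Some f)))`_k ->
  ~ has_blocker G f (ind R (nth set0 (acc_list G f) k))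
      (fun w => Aweak G M f w + (ind R (nth set0 (acc_list G f) k) w - M (Some f) w)).
Proof.
move=> Mp [Mind Mno] kl tk [M'' [M''01 [[M''ch M''U] M''A]]].
set us := acc_list G f in kl tk M''ch M''U M''A.
set U := nth set0 us k in M''ch M''U M''A.
set y := M (Some f) in tk M''A *.
have y01 := Mp (Some f); have Sy : y = chhat G (Some f) y := proj1 (Mind f).
have y0 i : 0 <= y i by case/andP: (y01 i).
have M''0 i : 0 <= M'' i by case/andP: (M''01 i).
set x := vmax M'' (ind R U) in M''ch.
have x0 i : 0 <= x i by rewrite /x /vmax le_max M''0.
(* Otherwise the procedure would spend the whole budget on [U], i.e. [M'' = 1_U]. *)
have [j jk xj] : exists2 j, (j < k)%N & forall i, i \in nth set0 us j -> 0 < x i.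
  have [/existsP [j /forall_inP xj]|/existsPn none] :=
    boolP [exists j : 'I_k, [forall (i | i \in nth set0 us j), 0 < x i]].
    by exists j.
  case: M''U; apply: functional_extensionality => w.
  rewrite M''ch chhatE (greedy_choice_single ler01 x0 kl) ?mul1r // => [j jk|i iU].
    have /forall_inPn [i ij xi] := none (Ordinal jk).
    by exists i => //; apply/eqP; rewrite eq_le x0 andbT leNgt.
  by rewrite /x /vmax le_max /ind iU lexx orbT.
pose P i := (i \notin U) && (0 < x i).
have PA i : P i -> y i < Aweak G M f i.
  case/andP=> iU xi; have := M''A i.
  rewrite /ind (negbTE iU) mulr0n sub0r.
  have -> : M'' i = x i by rewrite /x /vmax /ind (negbTE iU) mulr0n max_l.
  move=> h; lra.
have P1 i : P i -> y i < 1.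
  case/andP=> iU _; rewrite Sy chhatE.
  apply: le_lt_trans (greedy_choice_le_budgetB ler01 y0 kl iU) _.
  by rewrite gtrBl.
have yA i : y i <= Aweak G M f i by apply: le_Aweak (weakly_below_self G f i).
have raise_neq e : 0 < e -> tseqf G f (raise P e y) <> tseqf G f y.
  move=> e0; apply: (tseq_raise_preferred ler01 y0 _ jk kl tk) => [i|i ij].
    by rewrite /raise; case: ifP => _; rewrite ?lerDl ?(ltW e0).
  have [iU|iU] := boolP (i \in U); [by left | right].
  by rewrite /raise /P iU xj //= ltrDl.
apply: Mno; exists f.
exact: (has_blocker_raise Sy y01 yA PA P1 raise_neq).
Qed.

Lemma stable_transform2 M M' : is_pseudo M -> stable G M -> transform2 G M M' ->
  is_pseudo M' /\ stable G M'.
Proof.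
move=> Mp SM [f' [k [kl [tk [M'f' MM']]]]].
set U := nth set0 (acc_list G f') k in M'f'.
have y0 i : 0 <= M (Some f') i by case/andP: (Mp (Some f') i).
have tk_le i : i \in U -> (tseqf G f' (M (Some f')))`_k <= M (Some f') i.
  by move=> iU; apply: tseq_le; rewrite ?ler01.
split; [|split].
- move=> g w; have [->|gf'] := eqVneq g (Some f'); first by rewrite M'f' ind01.
  by rewrite MM' //; apply: Mp.
- move=> f; have [->|ff'] := eqVneq f f'; last first.
    by rewrite (MM' _ (Some_neq ff')); apply: (proj1 SM).
  rewrite M'f'; split; first by rewrite chhatE (greedy_choice_ind y0 kl tk).
  move=> w wf'; rewrite /ind; case: (boolP (w \in U)) => // wU.
  by have := tk_le w wU; rewrite ((proj1 SM f').2 w wf') leNgt tk.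
move=> [f blk]; have [ff'|ff'] := eqVneq f f'; last first.
  apply: (no_blocker_update Mp SM (Some_neq ff') MM') blk => w wf'.
  rewrite M'f' /ind; case: (boolP (w \in U)) => wU; last by rewrite ltNge y0.
  move=> _; have := leD_Aweak Mp (weakly_below_self G f w) wf' (Some_neq ff').
  apply: lt_le_trans.
  by rewrite ltrDl (lt_le_trans tk (tk_le w wU)).
subst f; move: blk; rewrite M'f'.
suff -> : Aweak G M' f' = fun w => Aweak G M f' w + (ind R U w - M (Some f') w).
  exact: no_blocker_chosen_set.
apply: functional_extensionality => w.
rewrite (@Aweak_update _ _ _ G M M' f' w (Some f')) => [|g gf']; last by rewrite MM'.
by rewrite weakly_below_self M'f'.
Qed.

End Transformations.

Theorem lemma3 (R : realFieldType) (F W : finType) (G : market F W)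
    (M M' : pmatching R F W) :
  is_pseudo M -> stable G M ->
  (transform1 G M M' \/ transform2 G M M' \/ transform3 M M') ->
  is_pseudo M' /\ stable G M'.
Proof.
move=> Mp SM [T|[T|T]].
- exact: stable_transform1 T.
- exact: stable_transform2 T.
- exact: stable_transform3 T.
Qed.
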